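(* Let $t$ be an $\mathrm{SL}_2$-tiling with enough ones. Then there exist $(x_\alpha,y_\alpha)\in\mathbb{Z}\times\mathbb{Z}$ for $\alpha\in\mathbb{Z}$ such that: (i) $t_{xy}=1$ if and only if $(x,y)=(x_\alpha,y_\alpha)$ for some $\alpha$; (ii) for each $\alpha$, either (a) $x_{\alpha+1}<x_\alpha$ and $y_{\alpha+1}=y_\alpha$, or (b) $x_{\alpha+1}=x_\alpha$ and $y_{\alpha+1}>y_\alpha$; (iii) as $\alpha\to\infty$ and as $\alpha\to-\infty$, there are infinitely many switches between options (a) and (b). Moreover, the $(x_\alpha,y_\alpha)$ with these properties are unique up to replacing $\alpha$ by $\alpha+k$ for a constant integer $k$.
   Context: An $\mathrm{SL}_2$-tiling is a map $t:\mathbb{Z}\times\mathbb{Z}\to\{1,2,3,\dots\}$, $(i,j)\mapsto t_{ij}$, with $t_{ij}t_{i+1,j+1}-t_{i,j+1}t_{i+1,j}=1$ for all $i,j$. It has enough ones if for every $(i,j)$ there is $(p,q)$ with $p<i,\ q>j$ and $t_{pq}=1$, and there is $(p,q)$ with $p>i,\ q<j$ and $t_{pq}=1$. *)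

From Stdlib Require Import ZArith.
Open Scope Z_scope.

Definition SL2_tiling (t : Z -> Z -> Z) : Prop :=
  (forall i j, 1 <= t i j) /\
  (forall i j, t i j * t (i+1) (j+1) - t i (j+1) * t (i+1) j = 1).

Definition enough_ones (t : Z -> Z -> Z) : Prop :=
  forall i j,
    (exists p q, p < i /\ q > j /\ t p q = 1) /\
    (exists p q, p > i /\ q < j /\ t p q = 1).

Definition optA (x y : Z -> Z) (a : Z) : Prop :=
  x (a+1) < x a /\ y (a+1) = y a.
Definition optB (x y : Z -> Z) (a : Z) : Prop :=
  x (a+1) = x a /\ y (a+1) > y a.

Definition switch_at (x y : Z -> Z) (a : Z) : Prop :=
  (optA x y a /\ optB x y (a+1)) \/ (optB x y a /\ optA x y (a+1)).

Definition ones_sequence (t : Z -> Z -> Z) (x y : Z -> Z) : Prop :=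
  (forall p q, t p q = 1 <-> exists a, p = x a /\ q = y a) /\
  (forall a, optA x y a \/ optB x y a) /\
  (forall N, exists a, N <= a /\ switch_at x y a) /\
  (forall N, exists a, a <= N /\ switch_at x y a).

(* The diagonal index y - x of an entry 1 is the key invariant.  All 2x2 minors of
   an SL2-tiling are positive, so no 1 lies strictly south-east of another, and each
   diagonal holds at most one 1.  Near a 1 at (p, q) the tiling has rank two on the
   north-east quadrant; from this, between a 1 and a 1 strictly north-east of it
   there is a third 1 on an intermediate diagonal.  Hence 1s on consecutive occupied
   diagonals share a row or a column.  Enumerating the occupied diagonals increasingly
   (they are unbounded both ways by "enough ones") gives the staircase; the switches
   follow from "enough ones" and a half-turn symmetry, and uniqueness from the fact
   that two staircases are reindexed by an increasing bijection of Z, a translation. *)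

From Stdlib Require Import ZArith Lia Classical IndefiniteDescription.
Open Scope Z_scope.

Lemma Z_up_ind (P : Z -> Prop) (N : Z) :
  P N -> (forall a, N <= a -> P a -> P (a + 1)) -> forall a, N <= a -> P a.
Proof.
  intros HN HS a Ha.
  replace a with (N + Z.of_nat (Z.to_nat (a - N))) by lia.
  induction (Z.to_nat (a - N)) as [|k IH].
  - now rewrite Z.add_0_r.
  - replace (N + Z.of_nat (S k)) with (N + Z.of_nat k + 1) by lia.
    apply HS; [lia | exact IH].
Qed.

Lemma Z_down_ind (P : Z -> Prop) (N : Z) :
  P N -> (forall a, a <= N -> P a -> P (a - 1)) -> forall a, a <= N -> P a.
Proof.
  intros HN HS a Ha.
  replace a with (- - a) by lia.
  apply (Z_up_ind (fun b => P (- b)) (- N)); [now rewrite Z.opp_involutive | | lia].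
  intros b Hb Pb. replace (- (b + 1)) with (- b - 1) by lia.
  apply HS; [lia | exact Pb].
Qed.

Lemma chain_lt (R : Z -> Z -> Prop) :
  (forall a, R a (a + 1)) -> (forall a b c, R a b -> R b c -> R a c) ->
  forall a b, a < b -> R a b.
Proof.
  intros Hstep Htrans a b Hab.
  apply (Z_up_ind (R a) (a + 1)); [apply Hstep | | lia].
  intros c _ Hac. exact (Htrans _ _ _ Hac (Hstep c)).
Qed.

Definition increasing (f : Z -> Z) : Prop := forall a b, a < b -> f a < f b.

Lemma increasing_reflect f a b : increasing f -> f a < f b -> a < b.
Proof.
  intros Hf Hab. destruct (Z.lt_total a b) as [H | [-> | H]]; [exact H | lia |].
  apply Hf in H. lia.
Qed.

Lemma increasing_inj f a b : increasing f -> f a = f b -> a = b.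
Proof.
  intros Hf Hab. destruct (Z.lt_total a b) as [H|[H|H]]; [|exact H|];
    apply Hf in H; lia.
Qed.

Lemma increasing_onto_shift (sigma : Z -> Z) :
  increasing sigma -> (forall m, exists a, sigma a = m) ->
  forall a, sigma a = a + sigma 0.
Proof.
  intros Hinc Honto.
  assert (succ : forall a, sigma (a + 1) = sigma a + 1).
  { intro a. destruct (Honto (sigma a + 1)) as [c Hc].
    assert (a < c) by (apply (increasing_reflect sigma); [exact Hinc | lia]).
    destruct (Z.eq_dec c (a + 1)) as [<-|Hne]; [exact Hc|].
    pose proof (Hinc a (a + 1) ltac:(lia)). pose proof (Hinc (a + 1) c ltac:(lia)). lia. }
  apply Z.peano_ind; [lia | |].
  - intros a IH. unfold Z.succ. rewrite succ. lia.
  - intros a IH. pose proof (succ (Z.pred a)) as E.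
    replace (Z.pred a + 1) with a in E by lia. lia.
Qed.

Lemma least_above (F : Z -> Prop) n : (exists m, F m /\ n < m) ->
  exists m, F m /\ n < m /\ forall k, F k -> n < k -> m <= k.
Proof.
  intros [m0 [Fm0 Hm0]].
  assert (Hd : 0 <= m0 - n) by lia.
  remember (m0 - n) as d eqn:Ed. revert m0 Ed Fm0 Hm0.
  pattern d; apply Z_lt_induction; [clear d Hd | exact Hd].
  intros d IH m Ed Fm Hm.
  destruct (classic (exists k, F k /\ n < k < m)) as [[k [Fk Hk]] | none].
  - apply (IH (k - n) ltac:(lia) k); auto; lia.
  - exists m. repeat split; [exact Fm | lia |].
    intros k Fk Hk. destruct (Z.lt_ge_cases k m); [exfalso; eauto | lia].
Qed.

Lemma greatest_below (F : Z -> Prop) n : (exists m, F m /\ m < n) ->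
  exists m, F m /\ m < n /\ forall k, F k -> k < n -> k <= m.
Proof.
  intros [m0 [Fm0 Hm0]].
  destruct (least_above (fun k => F (- k)) (- n)) as [m [Fm [Hm least]]].
  - exists (- m0). rewrite Z.opp_involutive. split; [exact Fm0 | lia].
  - exists (- m). split; [exact Fm | split; [lia |]].
    intros k Fk Hk. enough (m <= - k) by lia.
    apply least; [now rewrite Z.opp_involutive | lia].
Qed.

Section Enumeration.
Variable F : Z -> Prop.
Hypothesis F_above : forall n, exists m, F m /\ n < m.
Hypothesis F_below : forall n, exists m, F m /\ m < n.

Definition next_in (n : Z) : Z :=
  proj1_sig (constructive_indefinite_description _ (least_above F n (F_above n))).
Definition prev_in (n : Z) : Z :=
  proj1_sig (constructive_indefinite_description _ (greatest_below F n (F_below n))).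

Lemma next_spec n : F (next_in n) /\ n < next_in n /\ forall k, F k -> n < k -> next_in n <= k.
Proof. unfold next_in. destruct constructive_indefinite_description. exact a. Qed.

Lemma prev_spec n : F (prev_in n) /\ prev_in n < n /\ forall k, F k -> k < n -> k <= prev_in n.
Proof. unfold prev_in. destruct constructive_indefinite_description. exact a. Qed.

Lemma next_prev m : F m -> next_in (prev_in m) = m.
Proof.
  intros Fm. destruct (prev_spec m) as [_ [Hp greatest]].
  destruct (next_spec (prev_in m)) as [Fn [Hn least]].
  specialize (least m Fm Hp). specialize (greatest _ Fn). lia.
Qed.

Lemma prev_next m : F m -> prev_in (next_in m) = m.
Proof.
  intros Fm. destruct (next_spec m) as [_ [Hn least]].
  destruct (prev_spec (next_in m)) as [Fp [Hp greatest]].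
  specialize (greatest m Fm Hn). specialize (least _ Fp). lia.
Qed.

Definition enum (a : Z) : Z :=
  if 0 <=? a then Nat.iter (Z.to_nat a) next_in (next_in 0)
  else Nat.iter (Z.to_nat (- a)) prev_in (next_in 0).

Lemma enum_nonpos a : a <= 0 -> enum a = Nat.iter (Z.to_nat (- a)) prev_in (next_in 0).
Proof.
  intros Ha. unfold enum. destruct (Z.leb_spec 0 a); [|reflexivity].
  now replace a with 0 by lia.
Qed.

Lemma enum_in a : F (enum a).
Proof.
  unfold enum. destruct (0 <=? a).
  - destruct (Z.to_nat a); [|rewrite Nat.iter_succ]; apply next_spec.
  - destruct (Z.to_nat (- a)); [|rewrite Nat.iter_succ]; [apply next_spec | apply prev_spec].
Qed.

Lemma enum_succ a : enum (a + 1) = next_in (enum a).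
Proof.
  destruct (Z_le_gt_dec 0 a).
  - unfold enum. destruct (Z.leb_spec 0 a), (Z.leb_spec 0 (a + 1)); try lia.
    now replace (Z.to_nat (a + 1)) with (S (Z.to_nat a)) by lia.
  - rewrite !enum_nonpos by lia.
    replace (Z.to_nat (- a)) with (S (Z.to_nat (- (a + 1)))) by lia.
    rewrite Nat.iter_succ, next_prev; [reflexivity|].
    pose proof (enum_in (a + 1)) as E. rewrite enum_nonpos in E by lia. exact E.
Qed.

Lemma enum_pred a : enum (a - 1) = prev_in (enum a).
Proof.
  replace a with (a - 1 + 1) at 2 by lia. rewrite enum_succ, prev_next; [reflexivity|apply enum_in].
Qed.

Lemma enum_onto m : F m -> exists a, enum a = m.
Proof.
  intros Fm. set (m0 := enum 0).
  assert (Hd : 0 <= Z.abs (m - m0)) by lia.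
  remember (Z.abs (m - m0)) as d eqn:Ed. revert m Ed Fm.
  pattern d; apply Z_lt_induction; [clear d Hd | exact Hd].
  intros d IH m Ed Fm.
  destruct (Z.lt_total m0 m) as [Hlt | [Heq | Hgt]].
  - destruct (prev_spec m) as [Fp [Hp greatest]].
    pose proof (greatest m0 (enum_in 0) Hlt).
    destruct (IH (Z.abs (prev_in m - m0)) ltac:(lia) (prev_in m) eq_refl Fp) as [a Ha].
    exists (a + 1). now rewrite enum_succ, Ha, next_prev.
  - exists 0. exact Heq.
  - destruct (next_spec m) as [Fn [Hn least]].
    pose proof (least m0 (enum_in 0) Hgt).
    destruct (IH (Z.abs (next_in m - m0)) ltac:(lia) (next_in m) eq_refl Fn) as [a Ha].
    exists (a - 1). now rewrite enum_pred, Ha, prev_next.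
Qed.

End Enumeration.

Lemma enumeration (F : Z -> Prop) :
  (forall n, exists m, F m /\ n < m) -> (forall n, exists m, F m /\ m < n) ->
  exists g : Z -> Z, (forall a, F (g a)) /\ (forall a, g a < g (a + 1)) /\
    (forall a k, F k -> g a < k -> g (a + 1) <= k) /\ (forall m, F m -> exists a, g a = m).
Proof.
  intros above below. exists (enum F above below).
  split; [apply enum_in|]. split; [|split].
  - intro a. rewrite enum_succ. apply next_spec.
  - intros a k Fk Hk. rewrite enum_succ. now apply next_spec.
  - apply enum_onto.
Qed.

Section Staircase.
Variables x y : Z -> Z.
Hypothesis steps : forall a, optA x y a \/ optB x y a.

Lemma staircase_monotone a b : a <= b -> x b <= x a /\ y a <= y b.
Proof.
  intros Hab. apply (Z_up_ind (fun b => x b <= x a /\ y a <= y b) a); [lia | | exact Hab].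
  intros c _ IH. destruct (steps c) as [[? ?]|[? ?]]; lia.
Qed.

Lemma diagonal_increasing : increasing (fun a => y a - x a).
Proof.
  unfold increasing. apply (chain_lt (fun a b => y a - x a < y b - x b)); [| intros; lia].
  intro a. destruct (steps a) as [[? ?]|[? ?]]; lia.
Qed.

Lemma no_switch_uniform N : (forall a, N <= a -> ~ switch_at x y a) ->
  (forall a, N <= a -> optA x y a) \/ (forall a, N <= a -> optB x y a).
Proof.
  intros no_switch.
  destruct (steps N) as [HA | HB]; [left | right];
    apply Z_up_ind; try assumption; intros a Ha IH;
    destruct (steps (a + 1)); try assumption;
    exfalso; apply (no_switch a Ha); unfold switch_at; tauto.
Qed.

Lemma switches_ahead : (forall N, exists b, x b < x N /\ y N < y b) ->
  forall N, exists a, N <= a /\ switch_at x y a.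
Proof.
  intros north_east N. apply NNPP. intros none.
  destruct (north_east N) as [b [Hx Hy]].
  assert (Hb : N <= b).
  { destruct (Z.le_gt_cases N b); [assumption|]. pose proof (staircase_monotone b N). lia. }
  destruct (no_switch_uniform N) as [allA | allB]; [eauto | |].
  - enough (y b = y N) by lia.
    apply (Z_up_ind (fun c => y c = y N) N); [reflexivity | | exact Hb].
    intros c Hc IH. destruct (allA c Hc). lia.
  - enough (x b = x N) by lia.
    apply (Z_up_ind (fun c => x c = x N) N); [reflexivity | | exact Hb].
    intros c Hc IH. destruct (allB c Hc). lia.
Qed.

End Staircase.

Definition half_turn (f : Z -> Z) (a : Z) : Z := - f (- a).

Lemma half_turn_optA x y a : optA (half_turn x) (half_turn y) a <-> optA x y (- a - 1).
Proof.
  unfold optA, half_turn. replace (- (a + 1)) with (- a - 1) by lia.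
  replace (- a - 1 + 1) with (- a) by lia. lia.
Qed.

Lemma half_turn_optB x y a : optB (half_turn x) (half_turn y) a <-> optB x y (- a - 1).
Proof.
  unfold optB, half_turn. replace (- (a + 1)) with (- a - 1) by lia.
  replace (- a - 1 + 1) with (- a) by lia. lia.
Qed.

Lemma switches_behind x y : (forall a, optA x y a \/ optB x y a) ->
  (forall N, exists b, x N < x b /\ y b < y N) ->
  forall N, exists a, a <= N /\ switch_at x y a.
Proof.
  intros steps south_west N.
  destruct (switches_ahead (half_turn x) (half_turn y)) with (N := - N - 2) as [a [Ha Hsw]].
  - intro a. rewrite half_turn_optA, half_turn_optB. apply steps.
  - intro M. destruct (south_west (- M)) as [b [Hx Hy]]. exists (- b). unfold half_turn.
    rewrite Z.opp_involutive. lia.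
  - exists (- a - 2). split; [lia|]. unfold switch_at in *.
    rewrite !half_turn_optA, !half_turn_optB in Hsw.
    replace (- (a + 1) - 1) with (- a - 2) in Hsw by lia.
    replace (- a - 1) with (- a - 2 + 1) in Hsw by lia. tauto.
Qed.

(* Two enumerations of the ones satisfying (i) and (ii) differ by a shift of index:
   the reindexing map is an increasing bijection of Z. *)
Lemma ones_sequence_unique t x y x' y' :
  ones_sequence t x y -> ones_sequence t x' y' ->
  exists k, forall a, x' a = x (a + k) /\ y' a = y (a + k).
Proof.
  intros [ones [steps _]] [ones' [steps' _]].
  assert (reindex : forall a, exists b, x' a = x b /\ y' a = y b).
  { intro a. apply ones, ones'. eauto. }
  destruct (functional_choice _ reindex) as [sigma Hsigma].
  pose proof (diagonal_increasing x y steps) as diag.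
  assert (sigma_inc : increasing sigma).
  { intros a b Hab. apply (increasing_reflect _ _ _ diag).
    pose proof (diagonal_increasing x' y' steps' a b Hab). cbn beta in *.
    destruct (Hsigma a), (Hsigma b). lia. }
  assert (sigma_onto : forall m, exists a, sigma a = m).
  { intro m. assert (Hm : exists a, x m = x' a /\ y m = y' a) by (apply ones', ones; eauto).
    destruct Hm as [a [Hx Hy]]. exists a. apply (increasing_inj _ _ _ diag). cbn beta. destruct (Hsigma a). lia. }
  exists (sigma 0). intro a. rewrite <- (increasing_onto_shift sigma sigma_inc sigma_onto a).
  apply Hsigma.
Qed.

Definition minor2 (f : Z -> Z -> Z) (i j : Z) : Z :=
  f i j * f (i + 1) (j + 1) - f i (j + 1) * f (i + 1) j.

(* For vectors with positive coordinates, the relation u1 * v2 > u2 * v1 ("(u1, v1)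
   is flatter than (u2, v2)") is transitive: the slopes v/u increase. *)
Lemma steeper_trans u1 v1 u2 v2 u3 v3 :
  0 < u1 -> 0 < v1 -> 0 < u2 -> 0 < v2 -> 0 < u3 -> 0 < v3 ->
  u1 * v2 > u2 * v1 -> u2 * v3 > u3 * v2 -> u1 * v3 > u3 * v1.
Proof.
  intros. assert (u1 * v2 * (u2 * v3) > u2 * v1 * (u3 * v2)) by nia. nia.
Qed.

(* An array with positive entries satisfying the SL2 relation is determined, on a
   quadrant, by its values along the two boundary half-lines: each new entry is
   solved from the relation on the 2x2 block it completes. *)
Lemma sl2_boundary_unique (f g : Z -> Z -> Z) p q :
  (forall i j, 0 < f i j) -> (forall i j, minor2 f i j = 1) -> (forall i j, minor2 g i j = 1) ->
  (forall s, q <= s -> f p s = g p s) -> (forall r, r <= p -> f r q = g r q) ->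
  forall r, r <= p -> forall s, q <= s -> f r s = g r s.
Proof.
  intros f_pos f_det g_det row col.
  apply (Z_down_ind (fun r => forall s, q <= s -> f r s = g r s) p); [exact row|].
  intros a Ha IH.
  apply (Z_up_ind (fun s => f (a - 1) s = g (a - 1) s) q); [apply col; lia|].
  intros s Hs IHs.
  pose proof (f_det (a - 1) s) as Ef. pose proof (g_det (a - 1) s) as Eg.
  unfold minor2 in Ef, Eg. replace (a - 1 + 1) with a in Ef, Eg by lia.
  pose proof (f_pos a s) as Hpos.
  rewrite IHs, (IH s Hs), (IH (s + 1) ltac:(lia)) in Ef. rewrite (IH s Hs) in Hpos.
  apply (Z.mul_reg_r _ _ (g a s)); lia.
Qed.

Lemma column_companion (u w : Z -> Z) p :
  (forall r, 1 <= u r) -> w p = 0 -> (forall r, w r * u (r + 1) - u r * w (r + 1) = 1) ->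
  forall r, r <= p -> 0 <= w r /\ (w r < u r \/ exists r', r <= r' < p /\ u r' = 1).
Proof.
  intros u_pos w_p rel.
  apply Z_down_ind; [split; [lia | left; specialize (u_pos p); lia] |].
  intros a Ha [w_nonneg IH].
  pose proof (rel (a - 1)) as E. replace (a - 1 + 1) with a in E by lia.
  pose proof (u_pos a). pose proof (u_pos (a - 1)).
  assert (w_pos : 1 <= w (a - 1)) by nia.
  split; [lia|].
  destruct IH as [w_lt | [r' [Hr' one]]].
  - destruct (Z_lt_ge_dec (w (a - 1)) (u (a - 1))) as [lt | ge]; [now left|].
    right. exists (a - 1). split; [lia | nia].
  - right. exists r'. split; [lia | exact one].
Qed.

Section Tiling.
Variable t : Z -> Z -> Z.
Hypothesis t_pos : forall i j, 1 <= t i j.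
Hypothesis t_det : forall i j, minor2 t i j = 1.

Lemma t_pos_lt i j : 0 < t i j.
Proof. specialize (t_pos i j). lia. Qed.

(* All 2x2 minors of an SL2-tiling are positive, not only the adjacent ones: chain
   the adjacent relations first along rows, then along columns. *)
Lemma minor_pos i i' j j' : i < i' -> j < j' -> t i j * t i' j' > t i j' * t i' j.
Proof.
  intros Hi Hj.
  assert (adjacent_rows : forall r, t r j * t (r + 1) j' > t r j' * t (r + 1) j).
  { intro r. revert j' Hj.
    apply (chain_lt (fun j j' => t r j * t (r + 1) j' > t r j' * t (r + 1) j)).
    - intro a. pose proof (t_det r a). unfold minor2 in *. lia.
    - intros a b c. apply steeper_trans; apply t_pos_lt. }
  revert i' Hi. apply (chain_lt (fun i i' => t i j * t i' j' > t i j' * t i' j)); [auto|].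
  intros a b c Hab Hbc.
  pose proof (steeper_trans (t a j) (t a j') (t b j) (t b j') (t c j) (t c j')
    (t_pos_lt a j) (t_pos_lt a j') (t_pos_lt b j) (t_pos_lt b j') (t_pos_lt c j) (t_pos_lt c j')).
  lia.
Qed.

Lemma no_one_southeast p q p' q' : t p q = 1 -> t p' q' = 1 -> p < p' -> q < q' -> False.
Proof.
  intros one one' Hp Hq. pose proof (minor_pos p p' q q' Hp Hq).
  pose proof (t_pos p q'). pose proof (t_pos p' q). nia.
Qed.

Lemma one_per_diagonal p q p' q' : t p q = 1 -> t p' q' = 1 -> q - p = q' - p' -> p = p'.
Proof.
  intros one one' Hd. destruct (Z.lt_total p p') as [H | [H | H]]; [exfalso | exact H | exfalso].
  - apply (no_one_southeast p q p' q'); auto; lia.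
  - apply (no_one_southeast p' q' p q); auto; lia.
Qed.

(* Near an entry 1 at (p, q), the tiling has rank two on the north-east quadrant. *)
Section OneAt.
Variables p q : Z.
Hypothesis one_pq : t p q = 1.

(* The coefficients of the decomposition t r s = t r q * t p s - col_coeff r * row_coeff s. *)
Definition col_coeff (r : Z) : Z := t r q * t p (q + 1) - t r (q + 1).
Definition row_coeff (s : Z) : Z := t (p - 1) q * t p s - t (p - 1) s.

Lemma col_coeff_rel r : col_coeff r * t (r + 1) q - t r q * col_coeff (r + 1) = 1.
Proof. pose proof (t_det r q). unfold minor2, col_coeff in *. lia. Qed.

Lemma row_coeff_rel s : t p s * row_coeff (s + 1) - row_coeff s * t p (s + 1) = 1.
Proof.
  pose proof (t_det (p - 1) s). unfold minor2, row_coeff in *.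
  replace (p - 1 + 1) with p in * by lia. lia.
Qed.

Lemma col_coeff_at_one : col_coeff p = 0.
Proof. unfold col_coeff. rewrite one_pq. lia. Qed.

Lemma row_coeff_at_one : row_coeff q = 0.
Proof. unfold row_coeff. rewrite one_pq. lia. Qed.

(* The rank-two decomposition: both sides satisfy the SL2 relation and agree on
   row p and column q. *)
Lemma rank_two r s : r <= p -> q <= s -> t r s = t r q * t p s - col_coeff r * row_coeff s.
Proof.
  intros Hr Hs.
  apply (sl2_boundary_unique t (fun r s => t r q * t p s - col_coeff r * row_coeff s) p q);
    [exact t_pos_lt | exact t_det | | | | exact Hr | exact Hs].
  - intros i j. unfold minor2.
    transitivity ((col_coeff i * t (i + 1) q - t i q * col_coeff (i + 1)) *
                  (t p j * row_coeff (j + 1) - row_coeff j * t p (j + 1))); [ring|].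
    rewrite col_coeff_rel, row_coeff_rel. reflexivity.
  - intros s' _. rewrite col_coeff_at_one, one_pq. lia.
  - intros r' _. rewrite row_coeff_at_one. lia.
Qed.

Lemma column_from_one r : r <= p ->
  0 <= col_coeff r /\ (col_coeff r < t r q \/ exists r', r <= r' < p /\ t r' q = 1).
Proof.
  apply (column_companion (fun r => t r q)); auto using col_coeff_at_one, col_coeff_rel.
Qed.

(* The row case is the column case read backwards along row p. *)
Lemma row_from_one s : q <= s ->
  0 <= row_coeff s /\ (row_coeff s < t p s \/ exists s', q < s' <= s /\ t p s' = 1).
Proof.
  intros Hs.
  destruct (column_companion (fun k => t p (- k)) (fun k => row_coeff (- k)) (- q))
    with (r := - s) as [nonneg alt]; [auto | now rewrite Z.opp_involutive, row_coeff_at_one | | lia |].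
  - intro k. pose proof (row_coeff_rel (- k - 1)) as E.
    replace (- k - 1 + 1) with (- k) in E by lia. replace (- (k + 1)) with (- k - 1) by lia. lia.
  - rewrite Z.opp_involutive in nonneg, alt. split; [exact nonneg|].
    destruct alt as [lt | [k [Hk one]]]; [now left | right].
    exists (- k). split; [lia | exact one].
Qed.

(* Between the 1 at (p, q) and a 1 strictly to its north-east there is a further
   entry 1 on a diagonal strictly between theirs: otherwise the rank-two formula
   at (p', q') forces t p' q = 1. *)
Lemma one_between p' q' : t p' q' = 1 -> p' < p -> q < q' ->
  exists r s, t r s = 1 /\ q - p < s - r < q' - p'.
Proof.
  intros one' Hp Hq.
  destruct (column_from_one p' ltac:(lia)) as [Y_nonneg [Y_lt | [r' [Hr' one_r']]]];
    [| exists r', q; split; [exact one_r' | lia]].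
  destruct (row_from_one q' ltac:(lia)) as [W_nonneg [W_lt | [s' [Hs' one_s']]]];
    [| exists p, s'; split; [exact one_s' | lia]].
  exists p', q. split; [| lia].
  pose proof (rank_two p' q' ltac:(lia) ltac:(lia)) as R. rewrite one' in R.
  pose proof (t_pos p q'). nia.
Qed.

End OneAt.

Lemma consecutive_ones p q p' q' :
  t p q = 1 -> t p' q' = 1 -> q - p < q' - p' ->
  (forall r s, t r s = 1 -> ~ q - p < s - r < q' - p') ->
  (p' < p /\ q' = q) \/ (p' = p /\ q' > q).
Proof.
  intros one one' Hd gap.
  destruct (Z.eq_dec p' p) as [-> | Hp]; [right; lia|].
  destruct (Z.eq_dec q' q) as [-> | Hq]; [left; lia|].
  exfalso. destruct (Z.lt_total p' p) as [Hlt | [Heq | Hgt]]; [| lia |].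
  - destruct (Z.lt_total q q') as [Hq' | [Hq' | Hq']]; [| lia |].
    + destruct (one_between p q one p' q' one' Hlt Hq') as [r [s [one_rs Hrs]]].
      exact (gap r s one_rs Hrs).
    + exact (no_one_southeast p' q' p q one' one Hlt Hq').
  - exact (no_one_southeast p q p' q' one one' Hgt ltac:(lia)).
Qed.

Definition occupied (n : Z) : Prop := exists p, t p (p + n) = 1.

Hypothesis t_enough : enough_ones t.

Lemma occupied_above n : exists m, occupied m /\ n < m.
Proof.
  destruct (proj1 (t_enough 0 n)) as [p [q [Hp [Hq one]]]].
  exists (q - p). split; [exists p; now replace (p + (q - p)) with q by lia | lia].
Qed.

Lemma occupied_below n : exists m, occupied m /\ m < n.
Proof.
  destruct (proj2 (t_enough 0 n)) as [p [q [Hp [Hq one]]]].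
  exists (q - p). split; [exists p; now replace (p + (q - p)) with q by lia | lia].
Qed.

Lemma ones_along_diagonals (g x : Z -> Z) :
  (forall a, g a < g (a + 1)) -> (forall a k, occupied k -> g a < k -> g (a + 1) <= k) ->
  (forall m, occupied m -> exists a, g a = m) -> (forall a, t (x a) (x a + g a) = 1) ->
  ones_sequence t x (fun a => x a + g a).
Proof.
  intros g_lt g_gap g_onto one_x.
  assert (ones : forall p q, t p q = 1 <-> exists a, p = x a /\ q = x a + g a).
  { intros p q. split; [intro one | intros [a [-> ->]]; apply one_x].
    destruct (g_onto (q - p)) as [a Ha];
      [exists p; now replace (p + (q - p)) with q by lia|].
    exists a. assert (p = x a) by (apply (one_per_diagonal p q (x a) (x a + g a)); auto; lia).
    split; lia. }
  assert (steps : forall a, optA x (fun a => x a + g a) a \/ optB x (fun a => x a + g a) a).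
  { intro a.
    assert (gap : forall r s, t r s = 1 ->
              ~ x a + g a - x a < s - r < x (a + 1) + g (a + 1) - x (a + 1)).
    { intros r s one_rs Hrs.
      assert (occ : occupied (s - r)) by (exists r; now replace (r + (s - r)) with s by lia).
      pose proof (g_gap a (s - r) occ). lia. }
    destruct (consecutive_ones _ _ _ _ (one_x a) (one_x (a + 1))
                ltac:(specialize (g_lt a); lia) gap) as [[? ?] | [? ?]];
      [left | right]; unfold optA, optB; lia. }
  split; [exact ones|]. split; [exact steps|]. split.
  - apply switches_ahead; [exact steps|]. intro N.
    destruct (proj1 (t_enough (x N) (x N + g N))) as [p [q [Hp [Hq one]]]].
    destruct (proj1 (ones p q) one) as [b [-> ->]]. exists b. lia.
  - apply switches_behind; [exact steps|]. intro N.
    destruct (proj2 (t_enough (x N) (x N + g N))) as [p [q [Hp [Hq one]]]].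
    destruct (proj1 (ones p q) one) as [b [-> ->]]. exists b. lia.
Qed.

Lemma ones_sequence_exists : exists x y, ones_sequence t x y.
Proof.
  destruct (enumeration occupied occupied_above occupied_below)
    as [g [g_occ [g_lt [g_gap g_onto]]]].
  destruct (functional_choice (fun a p => t p (p + g a) = 1) g_occ) as [x one_x].
  exists x, (fun a => x a + g a). exact (ones_along_diagonals g x g_lt g_gap g_onto one_x).
Qed.

End Tiling.

Theorem proposition8p2 (t : Z -> Z -> Z) :
  SL2_tiling t -> enough_ones t ->
  (exists x y : Z -> Z, ones_sequence t x y) /\
  (forall x y x' y' : Z -> Z, ones_sequence t x y -> ones_sequence t x' y' ->
     exists k : Z, forall a, x' a = x (a + k) /\ y' a = y (a + k)).
Proof.
  intros [t_pos t_det] t_enough. split.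
  - exact (ones_sequence_exists t t_pos t_det t_enough).
  - intros x y x' y'. apply ones_sequence_unique.
Qed.
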